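(* Let $G$ be a grid-labelled graph of type $(3,3)$ with exactly $5$ edges, all diagonal. Then $G$ satisfies the degree criterion if and only if either $G$ is locally isomorphic to the skew-mesh $B_5$, or $E(G)$ is the disjoint union of the edge set of a graph locally isomorphic to a rotation of the criss-cross $B_2$ and the edge set of a graph locally isomorphic to a rotation of the tally $B_3$.
   Context: A grid-labelled graph of type $(a,b)$ is a simple graph whose vertex set is the grid $[a]\times[b]$. An edge $\{(i,j),(k,l)\}$ is diagonal if $i\neq k$ and $j\neq l$. The partial transpose $\Gamma(G)$ is the grid-labelled graph with edge set $\{\{(k,j),(i,l)\}:\{(i,j),(k,l)\}\in E(G)\}$; $G$ satisfies the degree criterion if every vertex has the same degree in $G$ and in $\Gamma(G)$. Two grid-labelled graphs $G,H$ of type $(a,b)$ are locally isomorphic if there are permutations $\pi$ of $[a]$ and $\sigma$ of $[b]$ with $\{(i,j),(k,l)\}\in E(G)\iff\{(\pi(i),\sigma(j)),(\pi(k),\sigma(l))\}\in E(H)$. A rotation of a type $(3,3)$ graph is its image under a power of the map $(i,j)\mapsto(j,4-i)$ on vertices. Building blocks (type $(3,3)$): criss-cross $B_2$ with edges $\{(1,1),(2,2)\},\{(1,2),(2,1)\}$; tally $B_3$ with edges $\{(1,1),(2,2)\},\{(1,2),(2,3)\},\{(2,1),(1,3)\}$; skew-mesh $B_5$ with edges $\{(1,1),(3,3)\},\{(1,2),(2,1)\},\{(1,3),(2,2)\},\{(2,2),(3,1)\},\{(2,3),(3,2)\}$. *)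

(* Grid [3]x[3] is encoded 0-indexed as 'I_3 * 'I_3. *)
From mathcomp Require Import all_boot all_fingroup.
Set Implicit Arguments. Unset Strict Implicit. Unset Printing Implicit Defensive.

Definition V := ('I_3 * 'I_3)%type.

(* A grid-labelled graph of type (3,3) is given by its edge set:
   a set of 2-element subsets of V. *)
Definition graph := {set {set V}}.

Definition is_simple (E : graph) : Prop :=
  forall e, e \in E -> exists u v : V, u != v /\ e = [set u; v].

Definition all_diagonal (E : graph) : Prop :=
  forall u v : V, [set u; v] \in E -> u.1 != v.1 /\ u.2 != v.2.

Definition ptrans (E : graph) : graph :=
  [set e' : {set V} | [exists u : V, exists v : V,
     ([set u; v] \in E) && (e' == [set (v.1, u.2); (u.1, v.2)])]].

Definition deg (E : graph) (x : V) : nat := #|[set e in E | x \in e]|.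

Definition degree_criterion (E : graph) : Prop :=
  forall x : V, deg E x = deg (ptrans E) x.

Definition locally_iso (G H : graph) : Prop :=
  exists (pi sigma : {perm 'I_3}), forall u v : V,
    ([set u; v] \in G) = ([set (pi u.1, sigma u.2); (pi v.1, sigma v.2)] \in H).

(* rotation (i,j) |-> (j, 4-i) in 1-indexed coordinates = (j, 2-i) 0-indexed *)
Definition rotv (x : V) : V := (x.2, rev_ord x.1).
Definition rotg (E : graph) : graph := [set rotv @: e | e : {set V} in E].

Definition pt (i j : nat) : V := (inord i, inord j).

Definition B2 : graph :=
  [set [set pt 0 0; pt 1 1]; [set pt 0 1; pt 1 0]].
Definition B3 : graph :=
  [set [set pt 0 0; pt 1 1]; [set pt 0 1; pt 1 2]; [set pt 1 0; pt 0 2]].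
Definition B5 : graph :=
  [set [set pt 0 0; pt 2 2]; [set pt 0 1; pt 1 0]; [set pt 0 2; pt 1 1];
       [set pt 1 1; pt 2 0]; [set pt 1 2; pt 2 1]].

From mathcomp Require Import all_boot all_fingroup.
Set Implicit Arguments. Unset Strict Implicit. Unset Printing Implicit Defensive.

(* The degree criterion asks that each vertex x have as many neighbours y as
   there are y with {(y.1, x.2), (x.1, y.2)} an edge.  Both counts are carried
   along by row and column permutations and by the rotation, and they add up
   over edge-disjoint unions; since B2, B3 and B5 satisfy the criterion, so
   does every graph of the two announced shapes.  Conversely, a graph with five
   diagonal edges is one of the C(18,5) five-element sets of diagonal edges of
   the 3x3 grid, and an exhaustive computation shows that each of them meeting
   the criterion is locally isomorphic to B5 or splits into a rotated
   criss-cross and a rotated tally. *)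

Lemma set2_eq (T : finType) (u v a b : T) :
  ([set u; v] == [set a; b]) = ((u, v) == (a, b)) || ((v, u) == (a, b)).
Proof.
apply/idP/idP => [/eqP uv_ab | /orP[] /eqP[-> ->] //]; last by rewrite setUC.
have au : a \in [set u; v] by rewrite uv_ab set21.
have bu : b \in [set u; v] by rewrite uv_ab set22.
have ua : u \in [set a; b] by rewrite -uv_ab set21.
have va : v \in [set a; b] by rewrite -uv_ab set22.
move: au bu ua va; rewrite !inE !xpair_eqE.
by do 2!case/orP=> /eqP->; rewrite ?eqxx ?orbT ?andbT ?orbb //= => _ ->.
Qed.

Lemma card_pred_bij (T : finType) (g : T -> T) (P : pred T) :
  bijective g -> #|[pred y | P (g y)]| = #|P|.
Proof.
case=> h gK hK; rewrite -(card_image (can_inj hK) P); apply: eq_card => x.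
by rewrite -{2}(gK x) (mem_image (can_inj hK)).
Qed.

Fixpoint ksubseqs (T : Type) (k : nat) (s : seq T) : seq (seq T) :=
  match k, s with
  | 0, _ => [:: [::]]
  | _.+1, [::] => [::]
  | k'.+1, x :: s' => map (cons x) (ksubseqs k' s') ++ ksubseqs k s'
  end.

Lemma mem_ksubseqs (T : eqType) (k : nat) (s t : seq T) :
  (t \in ksubseqs k s) = subseq t s && (size t == k).
Proof.
elim: s k t => [|x s IHs] [|k] [|y t] //=; rewrite ?inE ?andbF //.
  by rewrite mem_cat IHs andbF orbF; apply/mapP => -[].
have mem_cons L : (y :: t \in map (cons x) L) = (y == x) && (t \in L).
  by apply/mapP/andP => [[t' t'L [-> ->]] | [/eqP-> tL]]; [split | exists t].
rewrite mem_cat mem_cons !IHs eqSS; case: eqP => [-> | _] /=; last by [].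
case: (size t == k); rewrite ?andbF ?andbT //.
by apply/orP/idP => [[// | /cons_subseq] | ->]; [| left].
Qed.

(** * Balanced adjacency relations *)

Definition adj (E : graph) : rel V := fun u v => [set u; v] \in E.

Lemma adjC (E : graph) : symmetric (adj E).
Proof. by move=> u v; rewrite /adj setUC. Qed.

Definition ptrans_rel (r : rel V) : rel V := fun u v => r (v.1, u.2) (u.1, v.2).

Definition balanced (r : rel V) : Prop :=
  forall x, #|[pred y | r x y]| = #|[pred y | ptrans_rel r x y]|.

Lemma adj_ptrans (E : graph) : adj (ptrans E) =2 ptrans_rel (adj E).
Proof.
move=> u v; rewrite /adj /ptrans_rel inE; apply/existsP/idP => [[a /existsP[b]] | uv].
- case/andP=> ab /eqP/eqP; rewrite set2_eq !xpair_eqE.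
  by case/orP=> /andP[/eqP-> /eqP->] /=; rewrite -!surjective_pairing // setUC.
- exists (v.1, u.2); apply/existsP; exists (u.1, v.2).
  by rewrite [_ \in E]uv /= -!surjective_pairing.
Qed.

Lemma ptrans_simple (E : graph) : is_simple E -> is_simple (ptrans E).
Proof.
move=> simpleE e; rewrite inE => /existsP[u /existsP[v /andP[uvE /eqP->]]].
have [a [b [ab ab_uv]]] := simpleE _ uvE.
exists (v.1, u.2), (u.1, v.2); split=> //; apply: contraNneq ab => /pair_equal_spec[vu uv].
have u_v : u = v by rewrite [u]surjective_pairing [v]surjective_pairing vu uv.
by have := cards2 a b; rewrite -ab_uv u_v setUid cards1; case: eqP.
Qed.

Lemma deg_adj (E : graph) (x : V) : is_simple E -> deg E x = #|[pred y | adj E x y]|.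
Proof.
move=> simpleE.
have inj : injective (fun y => [set x; y]).
  move=> y z /eqP; rewrite set2_eq !xpair_eqE eqxx /=.
  by case/orP=> [/eqP // | /andP[/eqP-> /eqP]].
rewrite /deg -(card_imset [pred y | adj E x y] inj); apply: eq_card => e.
rewrite inE; apply/andP/imsetP => [[eE] | [y xy ->]]; last first.
  by rewrite set21.
have [a [b [_ e_ab]]] := simpleE _ eE.
rewrite e_ab in eE *; case/set2P=> ->; first by exists b.
by exists a; rewrite ?inE /adj setUC.
Qed.

Lemma degree_criterionE (E : graph) :
  is_simple E -> degree_criterion E <-> balanced (adj E).
Proof.
move=> simpleE.
have card_pt x : #|[pred y | adj (ptrans E) x y]| = #|[pred y | ptrans_rel (adj E) x y]|.
  by apply: eq_card => y; rewrite !inE adj_ptrans.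
by split=> crit x; have := crit x; rewrite !deg_adj ?card_pt //; apply: ptrans_simple.
Qed.

Lemma eq_balanced (r r' : rel V) : r =2 r' -> balanced r <-> balanced r'.
Proof.
move=> rr'.
have eq_r x : #|[pred y | r x y]| = #|[pred y | r' x y]|.
  by apply: eq_card => y; rewrite !inE rr'.
have eq_pt x : #|[pred y | ptrans_rel r x y]| = #|[pred y | ptrans_rel r' x y]|.
  by apply: eq_card => y; rewrite !inE /ptrans_rel rr'.
by split=> bal x; have := bal x; rewrite eq_r eq_pt.
Qed.

Lemma balanced_transport (r r' : rel V) (g : V -> V) : bijective g ->
    (forall x y, r' (g x) (g y) = r x y) ->
    (forall x y, ptrans_rel r' (g x) (g y) = ptrans_rel r x y) ->
  balanced r' <-> balanced r.
Proof.
move=> g_bij r'g ptg.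
have card_g (f f' : rel V) x : (forall y z, f' (g y) (g z) = f y z) ->
    #|[pred y | f' (g x) y]| = #|[pred y | f x y]|.
  move=> f'g; rewrite -(card_pred_bij [pred y | f' (g x) y] g_bij).
  by apply: eq_card => y; rewrite !inE /= f'g.
split=> bal x; first by rewrite -(card_g r r') // -(card_g _ _ _ ptg).
by have [h _ hK] := g_bij; rewrite -(hK x) (card_g r r') // (card_g _ _ _ ptg).
Qed.

Lemma balanced_locally_iso (G H : graph) :
  locally_iso G H -> balanced (adj H) -> balanced (adj G).
Proof.
case=> pi [sg iso_GH]; pose g (x : V) := (pi x.1, sg x.2).
have g_bij : bijective g.
  exists (fun x => ((pi^-1)%g x.1, (sg^-1)%g x.2)) => x;
  by rewrite /g /= ?permK ?permKV -surjective_pairing.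
by apply: (balanced_transport g_bij _ _).1 => x y; rewrite /ptrans_rel /adj iso_GH.
Qed.

Lemma rotv_bij : bijective rotv.
Proof.
by exists (fun x => (rev_ord x.2, x.1)) => x; rewrite /rotv /= rev_ordK -surjective_pairing.
Qed.

Lemma adj_rotg (H : graph) (u v : V) : adj (rotg H) (rotv u) (rotv v) = adj H u v.
Proof.
rewrite /adj.
have -> : [set rotv u; rotv v] = rotv @: [set u; v] by rewrite imsetU1 imset_set1.
by rewrite /rotg (mem_imset _ _ (imset_inj (bij_inj rotv_bij))).
Qed.

Lemma balanced_rotg (H : graph) : balanced (adj H) -> balanced (adj (rotg H)).
Proof.
apply: (balanced_transport rotv_bij (adj_rotg H) _).2 => x y; rewrite /ptrans_rel.
have -> : ((rotv y).1, (rotv x).2) = rotv (x.1, y.2) by [].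
have -> : ((rotv x).1, (rotv y).2) = rotv (y.1, x.2) by [].
by rewrite adj_rotg adjC.
Qed.

Lemma balanced_iter_rotg (H : graph) (k : nat) :
  balanced (adj H) -> balanced (adj (iter k rotg H)).
Proof. by move=> balH; elim: k => //= k; apply: balanced_rotg. Qed.

Lemma balanced_or (r1 r2 : rel V) : (forall u v, r1 u v -> ~~ r2 u v) ->
  balanced r1 -> balanced r2 -> balanced (fun u v => r1 u v || r2 u v).
Proof.
move=> r12 bal1 bal2 x.
have card_or (f1 f2 : rel V) : (forall u v, f1 u v -> ~~ f2 u v) ->
    #|[pred y | f1 x y || f2 x y]| = #|[pred y | f1 x y]| + #|[pred y | f2 x y]|.
  move=> f12; rewrite -cardUI [#|[predI _ & _]|]eq_card0 ?addn0 // => y.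
  by rewrite !inE /=; apply/negbTE/nandP; case f1xy: (f1 x y); [right; apply: f12 | left].
rewrite card_or // bal1 bal2 -card_or // => u v; exact: r12.
Qed.

Lemma balanced_setU (E1 E2 : graph) : [disjoint E1 & E2] ->
  balanced (adj E1) -> balanced (adj E2) -> balanced (adj (E1 :|: E2)).
Proof.
move=> disj bal1 bal2.
apply: (eq_balanced (r := fun u v => adj E1 u v || adj E2 u v) _).1.
  by move=> u v; rewrite /adj inE.
by apply: balanced_or => // u v uv; rewrite /adj (disjointFr disj uv).
Qed.

(** * Graphs given by lists of vertex pairs *)

(* These definitions are run by [vm_compute]: the vertices are listed
   explicitly because [enum 'I_3] is blocked by opaque proofs, and they are
   compared with [eqn] because the generic equality of [V] is slow to evaluate. *)
Definition ord_mid : 'I_3 := Ordinal (isT : 1 < 3).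
Definition ords3 : seq 'I_3 := [:: ord0; ord_mid; ord_max].
Definition grid : seq V := [seq (i, j) | i <- ords3, j <- ords3].

Lemma mem_ords3 (i : 'I_3) : i \in ords3.
Proof. by case: i => [[|[|[|m]]] lt_i3]. Qed.

Lemma mem_grid (x : V) : x \in grid.
Proof. by case: x => i j; apply/allpairsP; exists (i, j); rewrite !mem_ords3. Qed.

Lemma count_grid (P : pred V) : count P grid = #|P|.
Proof.
rewrite cardE -size_filter; apply/perm_size/uniq_perm; first exact: filter_uniq.
- exact: enum_uniq.
- by move=> x; rewrite mem_filter mem_enum mem_grid andbT.
Qed.

Definition eqV (u v : V) : bool := eqn u.1 v.1 && eqn u.2 v.2.

Lemma eqVE (u v : V) : eqV u v = (u == v).
Proof. by case: u v => [a b] [c d]; rewrite /eqV xpair_eqE. Qed.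

Definition seq_rel (s : seq (V * V)) : rel V := fun u v =>
  has (fun p => eqV p.1 u && eqV p.2 v || eqV p.1 v && eqV p.2 u) s.

Lemma seq_relE (s : seq (V * V)) (u v : V) :
  seq_rel s u v = ((u, v) \in s) || ((v, u) \in s).
Proof.
rewrite /seq_rel -!has_pred1 -has_predU; apply: eq_has => -[a b].
by rewrite /= !eqVE !xpair_eqE.
Qed.

Lemma seq_relC (s : seq (V * V)) : symmetric (seq_rel s).
Proof. by move=> u v; rewrite !seq_relE orbC. Qed.

Lemma seq_rel1 (q : V * V) (u v : V) : seq_rel [:: q] u v = ((u, v) == q) || ((v, u) == q).
Proof. by rewrite seq_relE !inE. Qed.

Lemma seq_rel_set2 (s : seq (V * V)) (u v : V) :
  seq_rel s u v = has (fun p => [set u; v] == [set p.1; p.2]) s.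
Proof.
rewrite seq_relE -!has_pred1 -has_predU; apply: eq_has => -[a b].
by rewrite /= set2_eq ![(a, b) == _]eq_sym.
Qed.

Lemma seq_rel_sub (s1 s : seq (V * V)) (u v : V) :
  {subset s1 <= s} -> seq_rel s1 u v -> seq_rel s u v.
Proof. by move=> s1s; rewrite !seq_relE => /orP[] /s1s ->; rewrite ?orbT. Qed.

Definition balancedb (r : rel V) : bool :=
  all (fun x => eqn (count (r x) grid) (count (ptrans_rel r x) grid)) grid.

Lemma balancedP (r : rel V) : reflect (balanced r) (balancedb r).
Proof.
apply: (iffP allP) => [bal x | bal x _]; apply/eqP.
- by rewrite -!count_grid; exact: bal (mem_grid x).
- by rewrite !count_grid; exact: bal x.
Qed.

Definition graph_of (s : seq (V * V)) : graph := [set [set p.1; p.2] | p in s].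

Lemma adj_graph_of (s : seq (V * V)) : adj (graph_of s) =2 seq_rel s.
Proof.
move=> u v; rewrite seq_rel_set2 /adj.
by apply/imsetP/hasP => [[p ps ->] | [p ps /eqP ->]]; exists p.
Qed.

Definition B2_pairs : seq (V * V) :=
  [:: ((ord0, ord0), (ord_mid, ord_mid)); ((ord0, ord_mid), (ord_mid, ord0))].
Definition B3_pairs : seq (V * V) :=
  [:: ((ord0, ord0), (ord_mid, ord_mid)); ((ord0, ord_mid), (ord_mid, ord_max));
      ((ord_mid, ord0), (ord0, ord_max))].
Definition B5_pairs : seq (V * V) :=
  [:: ((ord0, ord0), (ord_max, ord_max)); ((ord0, ord_mid), (ord_mid, ord0));
      ((ord0, ord_max), (ord_mid, ord_mid)); ((ord_mid, ord_mid), (ord_max, ord0));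
      ((ord_mid, ord_max), (ord_max, ord_mid))].

Lemma inord_ords3 :
  [/\ inord 0 = ord0 :> 'I_3, inord 1 = ord_mid & inord 2 = ord_max :> 'I_3].
Proof. by split; apply: val_inj; rewrite /= inordK. Qed.

Lemma adj_B2 : adj B2 =2 seq_rel B2_pairs.
Proof.
move=> u v; rewrite seq_rel_set2 /adj /B2 /pt; case: inord_ords3 => -> -> _.
by rewrite !inE /= orbF.
Qed.

Lemma adj_B3 : adj B3 =2 seq_rel B3_pairs.
Proof.
move=> u v; rewrite seq_rel_set2 /adj /B3 /pt; case: inord_ords3 => -> -> ->.
by rewrite !inE /= orbF !orbA.
Qed.

Lemma adj_B5 : adj B5 =2 seq_rel B5_pairs.
Proof.
move=> u v; rewrite seq_rel_set2 /adj /B5 /pt; case: inord_ords3 => -> -> ->.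
by rewrite !inE /= orbF !orbA.
Qed.

Lemma balanced_B2 : balanced (adj B2).
Proof. by apply/(eq_balanced adj_B2)/balancedP. Qed.

Lemma balanced_B3 : balanced (adj B3).
Proof. by apply/(eq_balanced adj_B3)/balancedP. Qed.

Lemma balanced_B5 : balanced (adj B5).
Proof. by apply/(eq_balanced adj_B5)/balancedP. Qed.

Definition cross_tally_split (E : graph) : Prop :=
  exists E1 E2 : graph, E = E1 :|: E2 /\ [disjoint E1 & E2] /\
    (exists k : nat, locally_iso E1 (iter k rotg B2)) /\
    (exists k : nat, locally_iso E2 (iter k rotg B3)).

Lemma cross_tally_split_balanced (E : graph) : cross_tally_split E -> balanced (adj E).
Proof.
case=> E1 [E2 [-> [disj [[k1 iso1] [k2 iso2]]]]]; apply: balanced_setU disj _ _.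
- exact: balanced_locally_iso iso1 (balanced_iter_rotg k1 balanced_B2).
- exact: balanced_locally_iso iso2 (balanced_iter_rotg k2 balanced_B3).
Qed.

(** * Graphs with five diagonal edges *)

Definition diag_pairs : seq (V * V) :=
  [seq p : V * V <- [seq (u, v) | u <- grid, v <- grid] |
     (p.1.1 < p.2.1) && (p.1.2 != p.2.2)].

Definition pairs_of (E : graph) : seq (V * V) := [seq p <- diag_pairs | adj E p.1 p.2].

Lemma adj_pairs_of (E : graph) : all_diagonal E -> adj E =2 seq_rel (pairs_of E).
Proof.
move=> diagE u v; rewrite seq_relE !mem_filter !allpairs_f ?mem_grid //= !andbT.
apply/idP/idP => [uvE | /orP[] /and3P[] // vuE _ _]; last by rewrite adjC.
have [uv1 uv2] := diagE _ _ uvE.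
by rewrite uvE adjC uvE uv2 eq_sym uv2 !andbT -neq_ltn.
Qed.

Lemma graph_of_pairs_of (E : graph) :
  is_simple E -> all_diagonal E -> graph_of (pairs_of E) = E.
Proof.
move=> simpleE diagE; apply/setP => e; apply/idP/idP => [/imsetP[p] | eE].
  by rewrite mem_filter => /andP[pE _] ->.
have [u [v [_ e_uv]]] := simpleE _ eE; rewrite e_uv in eE *.
by change (adj (graph_of (pairs_of E)) u v); rewrite adj_graph_of -adj_pairs_of.
Qed.

Lemma size_pairs_of (E : graph) :
  is_simple E -> all_diagonal E -> size (pairs_of E) = #|E|.
Proof.
move=> simpleE diagE; rewrite -{2}(graph_of_pairs_of simpleE diagE) card_in_imset.
  by apply/esym/card_uniqP/filter_uniq.
move=> [a b] [c d]; rewrite !mem_filter !allpairs_f ?mem_grid //= !andbT.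
move=> /and3P[_ ab _] /and3P[_ cd _] /eqP; rewrite set2_eq => /orP[/eqP // | /eqP[bc ad]].
by move: ab; rewrite bc ad ltnNge ltnW.
Qed.

Definition perms3 : seq (seq 'I_3) := Eval compute in permutations ords3.

Lemma perms3_inj (t : seq 'I_3) : t \in perms3 -> injective (fun i : 'I_3 => nth ord0 t i).
Proof.
move=> t_perm; have {t_perm} : perm_eq t ords3 by rewrite -mem_permutations.
move=> t_ords i j /eqP; rewrite nth_uniq ?(perm_uniq t_ords) ?(perm_size t_ords) //.
by move/eqP/val_inj.
Qed.

Definition cross (t t' : seq 'I_3) (x : V) : V := (nth ord0 t x.1, nth ord0 t' x.2).

Definition iso_via (f : V -> V) (s h : seq (V * V)) : bool :=
  all (fun p => seq_rel h (f p.1) (f p.2)) s &&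
  all (fun q => has (fun p => seq_rel [:: q] (f p.1) (f p.2)) s) h.

Lemma iso_viaP (f : V -> V) (s h : seq (V * V)) : injective f -> iso_via f s h ->
  forall u v, seq_rel s u v = seq_rel h (f u) (f v).
Proof.
move=> f_inj /andP[/allP s_h /allP h_s] u v; apply/idP/idP; rewrite seq_relE.
  by case/orP=> uv_s; [| rewrite seq_relC]; apply: s_h uv_s.
case/orP=> /h_s /hasP[[a b] ab_s]; rewrite seq_rel1 /= !xpair_eqE;
  by case/orP=> /andP[/eqP/f_inj <- /eqP/f_inj <-]; rewrite seq_relE ab_s ?orbT.
Qed.

Definition locally_isob (s h : seq (V * V)) : bool :=
  has (fun t => has (fun t' => iso_via (cross t t') s h) perms3) perms3.

Lemma locally_isob_iso (G H : graph) (s h : seq (V * V)) :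
  adj G =2 seq_rel s -> adj H =2 seq_rel h -> locally_isob s h -> locally_iso G H.
Proof.
move=> Gs Hh /hasP[t /perms3_inj t_inj /hasP[t' /perms3_inj t'_inj st]].
exists (perm t_inj), (perm t'_inj) => u v; rewrite !permE.
have f_inj : injective (cross t t') by move=> [a b] [c d] [/t_inj-> /t'_inj->].
by rewrite -[LHS]/(adj G u v) Gs (iso_viaP f_inj st) -Hh.
Qed.

Definition rot_pairs (h : seq (V * V)) : seq (V * V) := [seq (rotv p.1, rotv p.2) | p <- h].

Lemma seq_rel_rot (h : seq (V * V)) (u v : V) :
  seq_rel (rot_pairs h) (rotv u) (rotv v) = seq_rel h u v.
Proof.
pose f (p : V * V) := (rotv p.1, rotv p.2).
have [w rotvK _] := rotv_bij.
have f_inj : injective f.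
  by apply: (can_inj (g := fun p : V * V => (w p.1, w p.2))) => -[a b]; rewrite /f /= !rotvK.
by rewrite !seq_relE -[(rotv u, _)]/(f (u, v)) -[(rotv v, _)]/(f (v, u)) !(mem_map f_inj).
Qed.

Lemma adj_iter_rotg (k : nat) (H : graph) (h : seq (V * V)) :
  adj H =2 seq_rel h -> adj (iter k rotg H) =2 seq_rel (iter k rot_pairs h).
Proof.
move=> Hh; elim: k => [|k IHk] u v //=; have [w _ wK] := rotv_bij.
by rewrite -(wK u) -(wK v) adj_rotg seq_rel_rot IHk.
Qed.

Definition remove_pairs (s1 s : seq (V * V)) : seq (V * V) :=
  [seq p <- s | ~~ seq_rel s1 p.1 p.2].

Lemma seq_rel_remove_pairs (s1 s : seq (V * V)) (u v : V) :
  seq_rel (remove_pairs s1 s) u v = seq_rel s u v && ~~ seq_rel s1 u v.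
Proof.
rewrite [seq_rel (remove_pairs _ _) _ _]seq_relE !mem_filter /= (seq_relC s1 v).
by rewrite -andb_orr andbC [seq_rel s _ _]seq_relE.
Qed.

Lemma split_graph (E : graph) (s s1 : seq (V * V)) :
  adj E =2 seq_rel s -> {subset s1 <= s} ->
  exists E1 E2 : graph, [/\ E = E1 :|: E2, [disjoint E1 & E2],
    adj E1 =2 seq_rel s1 & adj E2 =2 seq_rel (remove_pairs s1 s)].
Proof.
move=> Es s1s; exists (E :&: graph_of s1), (E :\: graph_of s1).
have adjI u v : adj (E :&: graph_of s1) u v = seq_rel s u v && seq_rel s1 u v.
  by rewrite -Es -adj_graph_of /adj inE.
have adjD u v : adj (E :\: graph_of s1) u v = seq_rel s u v && ~~ seq_rel s1 u v.
  by rewrite -Es -adj_graph_of /adj inE andbC.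
split.
- by rewrite setID.
- rewrite -setI_eq0; apply/eqP/setP => e; rewrite !inE.
  by case: (e \in graph_of s1); rewrite ?andbF.
- by move=> u v; rewrite adjI; apply/andb_idl/seq_rel_sub.
- by move=> u v; rewrite adjD seq_rel_remove_pairs.
Qed.

Definition classified (s : seq (V * V)) : bool :=
  locally_isob s B5_pairs ||
  has (fun s1 =>
      has (fun k => locally_isob s1 (iter k rot_pairs B2_pairs)) (iota 0 4) &&
      has (fun k => locally_isob (remove_pairs s1 s) (iter k rot_pairs B3_pairs)) (iota 0 4))
    (ksubseqs 2 s).

Lemma classified_decomposition (E : graph) (s : seq (V * V)) :
  adj E =2 seq_rel s -> classified s -> locally_iso E B5 \/ cross_tally_split E.
Proof.
move=> Es /orP[iso5 | /hasP[s1 s1_s /andP[/hasP[k1 _ iso2] /hasP[k2 _ iso3]]]].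
  by left; apply: locally_isob_iso Es adj_B5 iso5.
have s1_sub : {subset s1 <= s} by move: s1_s; rewrite mem_ksubseqs => /andP[/mem_subseq].
have [E1 [E2 [-> disj E1s1 E2s2]]] := split_graph Es s1_sub.
right; exists E1, E2; do 3!split=> //.
- by exists k1; apply: locally_isob_iso E1s1 (adj_iter_rotg k1 adj_B2) iso2.
- by exists k2; apply: locally_isob_iso E2s2 (adj_iter_rotg k2 adj_B3) iso3.
Qed.

Lemma balanced_5subsets_classified :
  all classified [seq s <- ksubseqs 5 diag_pairs | balancedb (seq_rel s)].
Proof. by vm_compute. Qed.

Lemma balanced_classification (E : graph) : is_simple E -> all_diagonal E -> #|E| = 5 ->
  balanced (adj E) -> locally_iso E B5 \/ cross_tally_split E.
Proof.
move=> simpleE diagE card5 bal; have Es := adj_pairs_of diagE.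
apply: (classified_decomposition Es) (allP balanced_5subsets_classified _ _).
rewrite mem_filter mem_ksubseqs filter_subseq size_pairs_of // card5 eqxx !andbT.
by apply/balancedP; apply: (eq_balanced Es).1.
Qed.

Theorem mainTheorem14 (E : graph) :
  is_simple E -> #|E| = 5 -> all_diagonal E ->
  (degree_criterion E <->
    (locally_iso E B5 \/
     exists E1 E2 : graph,
       E = E1 :|: E2 /\ [disjoint E1 & E2] /\
       (exists k : nat, locally_iso E1 (iter k rotg B2)) /\
       (exists k : nat, locally_iso E2 (iter k rotg B3)))).
Proof.
move=> simpleE card5 diagE; apply: iff_trans (degree_criterionE simpleE) _; split.
  exact: balanced_classification.
case=> [isoB5 | splitE]; first exact: balanced_locally_iso isoB5 balanced_B5.
exact: cross_tally_split_balanced.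
Qed.
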